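(* For every graph $G$, $\alpha\text{-}tw(G)=\mu\text{-}tw(M(G))$.
   Context: All graphs are finite and simple. $M(G)$ is the graph obtained from $G$ by adding, for each vertex $v\in V(G)$, a new vertex $v'$ and the edge $vv'$. A tree decomposition of a graph $G$ is a tree $T$ with bags $B_t\subseteq V(G)$ such that nodes containing a given vertex induce a connected subtree and every edge lies in some bag. An induced matching is a set $M$ of pairwise disjoint edges such that the subgraph induced by their endpoints has exactly the edges of $M$. For $S\subseteq V(G)$: $\mu_G(S)$ is the maximum size of an induced matching of $G$ all of whose edges intersect $S$; $\alpha_G(S)$ is the maximum size of an independent set of $G$ contained in $S$. For $\lambda\in\{\mu,\alpha\}$, $\lambda_G(\mathcal{T})=\max_t\lambda_G(B_t)$ and $\lambda\text{-}tw(G)$ is its minimum over all tree decompositions $\mathcal{T}$ of $G$. *)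

From mathcomp Require Import all_boot.
From mathcomp Require Import boolp.
Set Implicit Arguments. Unset Strict Implicit. Unset Printing Implicit Defensive.

(* A (finite simple) graph is a symmetric irreflexive relation e on a finType V. *)

(* M(G): vertex set V + V, where inr v is the new pendant vertex v'. *)
Definition Mrel (V : finType) (e : rel V) : rel (V + V) :=
  fun x y => match x, y with
  | inl u, inl v => e u v
  | inl u, inr v => u == v
  | inr u, inl v => u == v
  | inr _, inr _ => false
  end.

Definition is_tree (n : nat) (tE : rel 'I_n) : Prop :=
  [/\ 0 < n, symmetric tE, irreflexive tE,
      (forall x y : 'I_n, connect tE x y) &
      (forall c : seq 'I_n, 2 < size c -> ~~ ucycleb tE c)].

Record tdec (V : finType) (e : rel V) := TDec {
  td_n : nat;
  td_E : rel 'I_td_n;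
  td_bag : 'I_td_n -> {set V};
  td_tree : is_tree td_E;
  td_cover : forall v : V, exists t, v \in td_bag t;
  td_edge : forall u v : V, e u v -> exists t, (u \in td_bag t) && (v \in td_bag t);
  td_conn : forall (v : V) (t1 t2 : 'I_td_n), v \in td_bag t1 -> v \in td_bag t2 ->
      connect (fun a b => [&& td_E a b, v \in td_bag a & v \in td_bag b]) t1 t2
}.

Definition independent (V : finType) (e : rel V) (A : {set V}) : bool :=
  [forall u in A, forall v in A, ~~ e u v].

Definition alpha (V : finType) (e : rel V) (S : {set V}) : nat :=
  \max_(A : {set V} | (A \subset S) && independent e A) #|A|.

Definition is_edge (V : finType) (e : rel V) (X : {set V}) : bool :=
  [exists u, exists v, (X == [set u; v]) && e u v].

Definition induced_matching (V : finType) (e : rel V) (M : {set {set V}}) : bool :=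
  [forall X in M, is_edge e X] &&
  [forall X in M, forall Y in M, (X != Y) ==>
     [forall u in X, forall v in Y, (u != v) && ~~ e u v]].

Definition mu (V : finType) (e : rel V) (S : {set V}) : nat :=
  \max_(M : {set {set V}} | induced_matching e M && [forall X in M, X :&: S != set0])
     #|M|.

Definition td_width (V : finType) (e : rel V) (lam : {set V} -> nat) (D : tdec e) : nat :=
  \max_(t < td_n D) lam (@td_bag _ _ D t).

Definition width_le (V : finType) (e : rel V) (lam : {set V} -> nat) (k : nat) : Prop :=
  exists D : tdec e, td_width lam D <= k.

Definition trivial_tdec (V : finType) (e : rel V) : tdec e.
Proof.
refine (@TDec V e 1 (fun _ _ => false) (fun _ => setT) _ _ _ _).
- split => //.
  + move=> x y; by rewrite (ord1 x) (ord1 y) connect0.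
  + by case=> [|x [|y c]] //= _; rewrite /ucycleb /=; case: c.
- move=> v; exists ord0; by rewrite inE.
- move=> u v _; exists ord0; by rewrite !inE.
- move=> v t1 t2 _ _; by rewrite (ord1 t1) (ord1 t2) connect0.
Defined.

Lemma width_le_ex (V : finType) (e : rel V) (lam : {set V} -> nat) :
  exists k, `[< width_le e lam k >].
Proof. exists (td_width lam (trivial_tdec e)); apply/asboolP; by exists (trivial_tdec e). Qed.

Definition lambda_tw (V : finType) (e : rel V) (lam : {set V} -> nat) : nat :=
  ex_minn (width_le_ex e lam).

Definition alpha_tw (V : finType) (e : rel V) : nat := lambda_tw e (alpha e).
Definition mu_tw (V : finType) (e : rel V) : nat := lambda_tw e (mu e).

From mathcomp Require Import all_boot.
From mathcomp Require Import boolp.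
Set Implicit Arguments. Unset Strict Implicit. Unset Printing Implicit Defensive.

(* A vertex map phi from G to H that sends every edge to an edge or to a single
   vertex pulls a tree decomposition of H back to one of G on the same tree,
   with bags phi^-1(B_t).  We pull back along the inclusion G -> M(G) and along
   the projection M(G) -> G identifying v and v'.  Bagwise, an independent set A
   of G inside B gives the induced matching {vv' : v in A} of M(G); conversely,
   an edge of M(G) meeting the preimage of B contains a vertex of B itself (an
   edge through v' contains v), and picking one such vertex per edge of an
   induced matching yields an independent set of G in B of the same size. *)

Lemma induced_matching_sep (V : finType) (e : rel V) M X Y u v :
    induced_matching e M -> X \in M -> Y \in M -> X != Y -> u \in X -> v \in Y ->
  (u != v) && ~~ e u v.
Proof.
case/andP=> _ /forall_inP sepM XM YM XY uX vY.
move/forall_inP/(_ Y YM): (sepM X XM); rewrite XY => /forall_inP/(_ u uX).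
by move/forall_inP; apply.
Qed.

Lemma mu_le_alpha (V : finType) (e : rel V) (S : {set V}) :
  irreflexive e -> mu e S <= alpha e S.
Proof.
move=> irr; apply/bigmax_leqP => M /andP[IM /forall_inP meetS].
have [-> | [X0 X0M]] := set_0Vmem M; first by rewrite cards0.
have [x0 _] := set0Pn _ (meetS X0 X0M).
pose r X := odflt x0 [pick x in X :&: S].
have rP X : X \in M -> r X \in X :&: S.
  by move/meetS/set0Pn => [x]; rewrite /r; case: pickP => // none; rewrite none.
have rX X : X \in M -> r X \in X by move/rP/setIP=> [].
have r_inj : {in M &, injective r}.
  move=> X Y XM YM rXY; apply/eqP; apply: contraT => XY.
  by have := induced_matching_sep IM XM YM XY (rX X XM) (rX Y YM); rewrite rXY eqxx.
rewrite -(card_in_imset r_inj); apply: leq_bigmax_cond; apply/andP; split.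
  by apply/subsetP => _ /imsetP[X XM ->]; case/setIP: (rP X XM).
apply/forall_inP => _ /imsetP[X XM ->]; apply/forall_inP => _ /imsetP[Y YM ->].
have [-> | XY] := eqVneq X Y; first by rewrite irr.
by case/andP: (induced_matching_sep IM XM YM XY (rX X XM) (rX Y YM)).
Qed.

Section PreimageDecomposition.
Variables (V W : finType) (e : rel V) (f : rel W) (phi : V -> W).
Hypothesis phi_edge : forall u v, e u v -> (phi u == phi v) || f (phi u) (phi v).
Variable D : tdec f.

Let bag (t : 'I_(td_n D)) : {set V} := phi @^-1: td_bag t.

Lemma preim_td_cover v : exists t, v \in bag t.
Proof. by have [t vt] := td_cover D (phi v); exists t; rewrite inE. Qed.

Lemma preim_td_edge u v : e u v -> exists t, (u \in bag t) && (v \in bag t).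
Proof.
case/phi_edge/orP => [/eqP uv | /(td_edge D)[t ut]]; last by exists t; rewrite !inE.
by have [t vt] := td_cover D (phi v); exists t; rewrite !inE uv vt.
Qed.

Lemma preim_td_conn v (t1 t2 : 'I_(td_n D)) : v \in bag t1 -> v \in bag t2 ->
  connect (fun a b => [&& td_E a b, v \in bag a & v \in bag b]) t1 t2.
Proof.
rewrite !inE => vt1 vt2; rewrite (eq_connect (e' := fun a b =>
  [&& td_E a b, phi v \in td_bag a & phi v \in td_bag b])); first exact: td_conn.
by move=> a b; rewrite !inE.
Qed.

Definition preim_tdec : tdec e :=
  TDec (td_tree D) preim_td_cover preim_td_edge preim_td_conn.

Lemma td_width_preim (lam : {set V} -> nat) (lam' : {set W} -> nat) :
    (forall B : {set W}, lam (phi @^-1: B) <= lam' B) ->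
  td_width lam preim_tdec <= td_width lam' D.
Proof.
move=> lam_le; apply/bigmax_leqP => t _.
exact: leq_trans (lam_le _) (leq_bigmax_cond (F := fun t => lam' (td_bag t)) _ _).
Qed.

End PreimageDecomposition.

Lemma lambda_tw_spec (V : finType) (e : rel V) (lam : {set V} -> nat) :
  width_le e lam (lambda_tw e lam).
Proof. by rewrite /lambda_tw; case: ex_minnP => m /asboolP. Qed.

Lemma lambda_tw_min (V : finType) (e : rel V) (lam : {set V} -> nat) k :
  width_le e lam k -> lambda_tw e lam <= k.
Proof. by rewrite /lambda_tw; case: ex_minnP => m _ min_m /asboolP; apply: min_m. Qed.

Lemma lambda_tw_preim (V W : finType) (e : rel V) (f : rel W) (phi : V -> W)
    (lam : {set V} -> nat) (lam' : {set W} -> nat) :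
    (forall u v, e u v -> (phi u == phi v) || f (phi u) (phi v)) ->
    (forall B : {set W}, lam (phi @^-1: B) <= lam' B) ->
  lambda_tw e lam <= lambda_tw f lam'.
Proof.
move=> phi_edge lam_le; have [D D_le] := lambda_tw_spec f lam'.
apply: lambda_tw_min; exists (preim_tdec phi_edge D).
exact: leq_trans (td_width_preim phi_edge D lam_le) D_le.
Qed.

Section Pendant.
Variables (V : finType) (e : rel V).

Definition Mbase (x : V + V) : V := match x with inl v | inr v => v end.

Lemma Mrel_irr : irreflexive e -> irreflexive (Mrel e).
Proof. by move=> irr [] v /=. Qed.

Lemma Mrel_Mbase x y : Mrel e x y -> (Mbase x == Mbase y) || e (Mbase x) (Mbase y).
Proof. by case: x y => u [] v //= uv; rewrite uv ?orbT. Qed.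

Lemma Medge_inr X v : is_edge (Mrel e) X -> inr v \in X -> inl v \in X.
Proof.
case/existsP=> a /existsP[b /andP[/eqP -> ab]]; rewrite !inE.
case/orP=> /eqP xv; move: ab; rewrite -xv.
  by case: b => //= w /eqP ->; rewrite eqxx ?orbT.
by case: a => //= w /eqP ->; rewrite eqxx.
Qed.

Definition pendant_matching (A : {set V}) : {set {set V + V}} :=
  [set [set inl v; inr v] | v in A].

Lemma card_pendant_matching A : #|pendant_matching A| = #|A|.
Proof.
apply: card_imset => v w /setP/(_ (inl v)).
by rewrite !inE eqxx /= => /esym/orP[/eqP[] | /eqP].
Qed.

Lemma pendant_matching_induced A :
  independent e A -> induced_matching (Mrel e) (pendant_matching A).
Proof.
move=> /forall_inP indA; apply/andP; split.
  apply/forall_inP => _ /imsetP[v _ ->].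
  by apply/existsP; exists (inl v); apply/existsP; exists (inr v); rewrite eqxx /=.
apply/forall_inP => _ /imsetP[v vA ->]; apply/forall_inP => _ /imsetP[w wA ->].
apply/implyP => vw_neq; have vw : v != w by apply: contraNneq vw_neq => ->.
apply/forall_inP => x; rewrite !inE => /orP[]/eqP->;
apply/forall_inP => y; rewrite !inE => /orP[]/eqP-> //=; rewrite ?vw //=.
exact: (forall_inP (indA v vA)).
Qed.

Lemma alpha_le_mu_M (S : {set V + V}) : alpha e (inl @^-1: S) <= mu (Mrel e) S.
Proof.
apply/bigmax_leqP => A /andP[AS indA]; rewrite -card_pendant_matching.
apply: leq_bigmax_cond; rewrite pendant_matching_induced //=.
apply/forall_inP => _ /imsetP[v vA ->]; apply/set0Pn; exists (inl v).
by rewrite !inE eqxx /=; move/subsetP/(_ v vA): AS; rewrite inE.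
Qed.

Lemma mu_M_preim_Mbase (B : {set V}) :
  mu (Mrel e) (Mbase @^-1: B) <= mu (Mrel e) (inl @: B).
Proof.
apply/bigmax_leqP => M /andP[IM /forall_inP meetB].
apply: leq_bigmax_cond; rewrite IM; apply/forall_inP => X XM.
have /set0Pn[x /setIP[xX xB]] := meetB X XM.
rewrite inE in xB; apply/set0Pn; exists (inl (Mbase x)).
rewrite inE (mem_imset _ _ inl_inj) xB andbT.
case: x xX {xB} => v //= vX.
exact: Medge_inr (forall_inP (proj1 (andP IM)) X XM) vX.
Qed.

Lemma alpha_M_inl (B : {set V}) : alpha (Mrel e) (inl @: B) <= alpha e B.
Proof.
apply/bigmax_leqP => A /andP[AB /forall_inP indA].
have -> : A = inl @: (inl @^-1: A).
  apply/setP => -[] v; rewrite ?(mem_imset _ _ inl_inj) ?inE //.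
  by apply/idP/imsetP => [/(subsetP AB)/imsetP[] | []].
rewrite (card_imset _ inl_inj); apply: leq_bigmax_cond; apply/andP; split.
  by apply/subsetP => v; rewrite inE => /(subsetP AB); rewrite (mem_imset _ _ inl_inj).
apply/forall_inP => u; rewrite inE => uA; apply/forall_inP => v; rewrite inE => vA.
exact: (forall_inP (indA _ uA) _ vA).
Qed.

End Pendant.

Theorem mainTheorem9 (V : finType) (e : rel V) :
  symmetric e -> irreflexive e ->
  alpha_tw e = mu_tw (Mrel e).
Proof.
move=> _ irr; apply/eqP; rewrite eqn_leq; apply/andP; split.
  apply: (lambda_tw_preim (phi := inl)) => [u v uv | S]; first by rewrite /= uv orbT.
  exact: alpha_le_mu_M.
apply: (lambda_tw_preim (phi := @Mbase V)) => [x y /Mrel_Mbase // | B].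
apply: leq_trans (mu_M_preim_Mbase e B) _.
exact: leq_trans (mu_le_alpha _ (Mrel_irr irr)) (alpha_M_inl e B).
Qed.
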